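(* Let $N$ be an odd prime and let $M=(N-1)/2$. Then for every integer $r$ with $0<r\le M$, the inverse problem $\mathrm{IP}(N,r,1)$ is uniquely solvable; that is, for any two distinct vectors ${\tt x},{\tt y}\in\Omega(N,r)$ one has $\tilde{x}_1\neq\tilde{y}_1$.
   Context: For a vector ${\tt v}=(v_1,\dots,v_N)$ of odd length $N>1$, its discrete Fourier transform (DFT) coefficients are $\tilde{v}_m=\sum_{n=1}^N v_n e^{\mathrm{i}\xi m n}$ with $\xi=2\pi/N$, for integers $m$. A vector is binary if all its entries are $0$ or $1$. $\Omega(N,r)$ denotes the set of binary vectors of length $N$ containing exactly $r$ ones (popcount $r$), so $\tilde{x}_0=r$ for ${\tt x}\in\Omega(N,r)$. For $1\le L\le M=(N-1)/2$, two vectors ${\tt x},{\tt y}\in\Omega(N,r)$ are called $L$-distinguishable if $\tilde{x}_m\neq\tilde{y}_m$ for some $m\in\{1,\dots,L\}$, and $L$-indistinguishable otherwise. The inverse problem $\mathrm{IP}(N,r,L)$ (recovering ${\tt x}\in\Omega(N,r)$ from $\tilde{x}_1,\dots,\tilde{x}_L$) is called uniquely solvable if all pairs of distinct vectors in $\Omega(N,r)$ are $L$-distinguishable. *)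

From Stdlib Require Import Reals List Arith ZArith Znumtheory.
From Coquelicot Require Import Coquelicot.
Open Scope R_scope.

Definition cis (theta : R) : C := (cos theta, sin theta).

(* A vector v = (v_1,...,v_N) of length N is a list of length N;
   v_n = nth (n-1) v.  Binary vectors are lists of booleans. *)
Definition b2R (b : bool) : R := if b then 1 else 0.

Fixpoint dft_aux (l : list bool) (k : nat) (theta : R) : C :=
  match l with
  | nil => RtoC 0
  | b :: l' => Cplus (Cmult (RtoC (b2R b)) (cis (theta * INR k))) (dft_aux l' (S k) theta)
  end.

(* DFT coefficient  \tilde v_m = sum_{n=1}^N v_n e^{i xi m n},  xi = 2 pi / N *)
Definition dft (N : nat) (v : list bool) (m : nat) : C :=
  dft_aux v 1 (2 * PI / INR N * INR m).

Definition Omega (N r : nat) (x : list bool) : Prop :=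
  length x = N /\ count_occ Bool.bool_dec x true = r.

From Stdlib Require Import Reals List ZArith Znumtheory Lia Lra.
From Coquelicot Require Import Coquelicot.
From mathcomp Require all_boot all_algebra all_field Rstruct complex.

(* With zeta = e^(2 pi i / N), the first DFT coefficient of x is zeta * P_x(zeta),
   where P_x = sum_n x_n X^(n-1) has rational coefficients. If x and y in
   Omega(N, r) had the same first coefficient, q = P_x - P_y would have degree
   < N and vanish both at zeta and (equal popcounts) at 1. As N is prime, the
   cyclotomic polynomial Phi_N is the minimal polynomial of zeta over Q, has
   degree N - 1 and does not vanish at 1, so (X - 1) Phi_N, of degree N,
   divides q; hence q = 0 and x = y. *)

Lemma dft_angle_full_turn (N : nat) :
  (0 < N)%nat -> 2 * PI / INR N * INR 1 * INR N = 2 * PI.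
Proof.
intros HN. apply lt_0_INR in HN. simpl. field. lra.
Qed.

Lemma cos_dft_angle_lt_1 (N : nat) : (1 < N)%nat -> cos (2 * PI / INR N * INR 1) < 1.
Proof.
intros HN.
assert (HN2 : 2 <= INR N) by (change 2 with (INR 2); apply le_INR; lia).
pose proof PI_RGT_0.
assert (Hpos : 0 < 2 * PI / INR N) by (apply Rdiv_lt_0_compat; lra).
assert (Hle : 2 * PI / INR N <= PI).
{ apply (Rmult_le_reg_r (INR N)); [lra|].
  unfold Rdiv. rewrite Rmult_assoc, Rinv_l by lra. nra. }
simpl. rewrite Rmult_1_r, <- cos_0.
apply cos_decreasing_1; lra.
Qed.

Lemma nat_divisors_of_Zprime (p : nat) :
  prime (Z.of_nat p) -> (1 < p)%nat /\ forall d k : nat, p = (k * d)%nat -> d = 1%nat \/ d = p.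
Proof.
intros p_pr. pose proof (prime_ge_2 _ p_pr). split; [lia|].
intros d k def_p.
assert (d_dvd : (Z.of_nat d | Z.of_nat p)%Z).
{ exists (Z.of_nat k). rewrite def_p, Nat2Z.inj_mul. ring. }
destruct (prime_divisors _ p_pr _ d_dvd) as [|[|[|]]]; lia.
Qed.

Module BinaryDFT.
Import all_boot all_algebra all_field Rstruct complex.
Import GRing.Theory Num.Theory.
Local Open Scope ring_scope.

Local Notation PhiQ n := (map_poly (intr : int -> rat) 'Phi_n).

Lemma map_PhiQ (F : numFieldType) (n : nat) :
  map_poly (ratr : rat -> F) (PhiQ n) = map_poly intr 'Phi_n.
Proof. by rewrite -map_poly_comp; apply: eq_map_poly => a /=; rewrite ratr_int. Qed.

Lemma PhiQ_monic (n : nat) : PhiQ n \is monic.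
Proof. exact: monic_map (Cyclotomic_monic n). Qed.

Lemma Cyclotomic_prime (p : nat) :
  prime p -> ('X - 1) * 'Phi_p = 'X^p - 1 :> {poly int}.
Proof.
move=> p_pr; have p_gt1 := prime_gt1 p_pr.
have Phi1 : 'Phi_1 = 'X - 1 :> {poly int}.
  by rewrite -(prod_Cyclotomic (ltn0Sn 0)) /= big_cons big_nil mulr1.
have divisors_p : perm_eq (divisors p) [:: 1%N; p].
  apply: uniq_perm; first exact: divisors_uniq.
    by rewrite /= inE andbT neq_ltn p_gt1.
  move=> d; rewrite -dvdn_divisors ?prime_gt0 // !inE.
  apply/idP/idP; first by move: p_pr => /primeP [_]; apply.
  by case/orP=> /eqP ->; rewrite ?dvd1n ?dvdnn.
by rewrite -(prod_Cyclotomic (prime_gt0 p_pr)) (perm_big _ divisors_p) /=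
  big_cons big_cons big_nil mulr1 Phi1.
Qed.

Lemma root_Cyclotomic_prime (F : idomainType) (p : nat) (z : F) :
  prime p -> z ^+ p = 1 -> z != 1 -> root (map_poly intr 'Phi_p) z.
Proof.
move=> p_pr zp z_neq1.
have := congr1 (fun P => (map_poly (intr : int -> F) P).[z]) (Cyclotomic_prime p p_pr).
rewrite /= rmorphM !rmorphB /= map_polyX map_polyXn !rmorph1 hornerM !hornerE zp subrr.
by move/eqP; rewrite mulf_eq0 subr_eq0 (negbTE z_neq1).
Qed.

Lemma Cyclotomic_at1_neq0 (n : nat) : (1 < n)%N -> ('Phi_n).[1] != 0.
Proof.
move=> n_gt1; have [w prim_w] := C_prim_root_exists (ltnW n_gt1).
rewrite -(intr_eq0 algC) -[1 in X in X != 0](rmorph1 intr) -horner_map.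
rewrite (Cintr_Cyclotomic prim_w) -rootE root_cyclotomic //.
by apply: contraL n_gt1 => /prim_order_dvd/(_ 1%N); rewrite expr1 eqxx dvdn1 => /eqP ->.
Qed.

Lemma PhiQ_dvdp (F : numFieldType) (n : nat) (z : F) (q : {poly rat}) :
  (0 < n)%N -> root (map_poly intr 'Phi_n) z -> root (map_poly ratr q) z ->
  PhiQ n %| q.
Proof.
(* A complex root of gcd(Phi_n, q) is a primitive n-th root of unity, whose
   minimal polynomial over Q is Phi_n. *)
move=> n_gt0 Phi_z q_z; set g := gcdp (PhiQ n) q.
have g_gt1 : (1 < size g)%N.
  rewrite -(size_map_poly (ratr : {rmorphism rat -> F})).
  apply: (@root_size_gt1 _ z).
    by rewrite map_poly_eq0 gcdp_eq0 negb_and monic_neq0 ?PhiQ_monic.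
  have PhiQ_z : root (map_poly ratr (PhiQ n)) z by rewrite map_PhiQ.
  by rewrite gcdp_map root_gcd PhiQ_z.
have [w g_w] : exists w : algC, root (map_poly ratr g) w.
  by apply/closed_rootP; rewrite size_map_poly gtn_eqF.
have prim_w : n.-primitive_root w.
  have [w0 prim_w0] := C_prim_root_exists n_gt0.
  rewrite -(root_cyclotomic prim_w0) -(Cintr_Cyclotomic prim_w0) -map_PhiQ.
  by apply: root_dvdp g_w; rewrite dvdp_map dvdp_gcdl.
have [P [DP _] dvdP] := minCpolyP w.
have -> : PhiQ n = P.
  apply: (map_inj_poly (fmorph_inj (ratr : {rmorphism rat -> algC})) (rmorph0 _)).
  rewrite [LHS]map_PhiQ (Cintr_Cyclotomic prim_w) -(minCpoly_cyclotomic prim_w).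
  exact: DP.
by rewrite -dvdP; apply: root_dvdp g_w; rewrite dvdp_map dvdp_gcdr.
Qed.

Lemma poly_rat_eq0_at_prime_root (F : numFieldType) (p : nat) (z : F) (q : {poly rat}) :
  prime p -> z ^+ p = 1 -> z != 1 -> (size q <= p)%N ->
  root (map_poly ratr q) z -> root q 1 -> q = 0.
Proof.
move=> p_pr zp z_neq1 size_q q_z q_1.
have size_PhiQ : size (PhiQ p) = p.
  rewrite size_map_poly_id0 ?(monicP (Cyclotomic_monic p)) ?oner_eq0 //.
  by rewrite size_Cyclotomic totient_prime // prednK ?prime_gt0.
have PhiQ_1 : ~~ root (PhiQ p) 1.
  have := horner_map (intr : {rmorphism int -> rat}) 'Phi_p 1.
  rewrite /root rmorph1 => ->; rewrite intr_eq0.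
  exact: Cyclotomic_at1_neq0 (prime_gt1 p_pr).
have dvd_q : ('X - 1%:P) * PhiQ p %| q.
  rewrite Gauss_dvdp; last by rewrite coprimep_sym coprimep_XsubC.
  rewrite dvdp_XsubCl q_1 /=.
  apply: (PhiQ_dvdp _ _ _ _ (prime_gt0 p_pr) _ q_z).
  exact: root_Cyclotomic_prime.
apply/eqP; apply: contraLR size_q => q_neq0; rewrite -ltnNge.
move: (dvdp_leq q_neq0 dvd_q).
by rewrite size_mul ?polyXsubC_eq0 ?monic_neq0 ?PhiQ_monic // size_XsubC size_PhiQ.
Qed.

Definition bits_poly (R : nzSemiRingType) (s : seq bool) : {poly R} :=
  Poly [seq (nat_of_bool b)%:R | b <- s].

Lemma map_bits_poly (R S : nzSemiRingType) (f : {rmorphism R -> S}) (s : seq bool) :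
  map_poly f (bits_poly R s) = bits_poly S s.
Proof.
by rewrite map_Poly -map_comp; congr Poly; apply: eq_map => b /=; rewrite rmorph_nat.
Qed.

Lemma size_bits_poly (R : nzSemiRingType) (s : seq bool) : (size (bits_poly R s) <= size s)%N.
Proof. by rewrite (leq_trans (size_Poly _)) ?size_map. Qed.

Lemma coef_bits_poly (R : nzSemiRingType) (s : seq bool) (i : nat) :
  (bits_poly R s)`_i = (nth false s i : nat)%:R.
Proof.
rewrite coef_Poly; have [i_lt|i_ge] := ltnP i (size s); first by rewrite (nth_map false).
by rewrite !nth_default ?size_map.
Qed.

Lemma bits_poly_inj (R : nzSemiRingType) (s t : seq bool) :
  size s = size t -> bits_poly R s = bits_poly R t -> s = t.
Proof.
move=> eq_size eq_poly; apply: (eq_from_nth (x0 := false)) eq_size _ => i _.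
have /eqP := congr1 (fun p : {poly R} => p`_i) eq_poly; rewrite /= !coef_bits_poly.
by case: (nth false s i); case: (nth false t i); rewrite //= ?oner_eq0 // eq_sym oner_eq0.
Qed.

Lemma bits_poly_at1 (R : nzSemiRingType) (s : seq bool) :
  (bits_poly R s).[1] = (count id s)%:R.
Proof.
elim: s => [|b s IH]; first by rewrite /bits_poly /= horner0.
by rewrite /bits_poly /= horner_cons -/(bits_poly R s) IH mulr1 addrC -natrD.
Qed.

(* Coquelicot's operations on C and MathComp's on R[i] are convertible, so
   toC is a ring morphism by computation. *)
Definition toC (u : C) : Rdefinitions.R[i] := Complex u.1 u.2.

Lemma toCD (u v : C) : toC (Cplus u v) = toC u + toC v.
Proof. by []. Qed.

Lemma toCM (u v : C) : toC (Cmult u v) = toC u * toC v.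
Proof. by []. Qed.

Lemma toC_b2R (b : bool) : toC (RtoC (b2R b)) = (nat_of_bool b)%:R.
Proof. by case: b. Qed.

Lemma toC_cis_exp (t : Rdefinitions.R) (n : nat) : toC (cis t) ^+ n = toC (cis (t * INR n)).
Proof.
elim: n => [|n IH]; first by rewrite expr0 /toC /= Rmult_0_r cos_0 sin_0.
rewrite exprSr IH S_INR Rmult_plus_distr_l Rmult_1_r /toC /= cosD sinD.
by congr Complex; rewrite addrC.
Qed.

Lemma toC_dft_aux (s : seq bool) (k : nat) (t : Rdefinitions.R) :
  toC (dft_aux s k t) = toC (cis t) ^+ k * (bits_poly _ s).[toC (cis t)].
Proof.
elim: s k => [|b s IH] k /=; first by rewrite /bits_poly /= horner0 mulr0.
rewrite toCD toCM IH toC_b2R -toC_cis_exp /bits_poly /= horner_cons -/(bits_poly _ s).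
rewrite exprSr mulrDr addrC; congr (_ + _); [by rewrite mulrA mulrAC | exact: mulrC].
Qed.

Lemma prime_of_Zprime (p : nat) : Znumtheory.prime (Z.of_nat p) -> prime p.
Proof.
case/nat_divisors_of_Zprime => /ltP p_gt1 p_div.
by apply/primeP; split=> // d /dvdnP [k /p_div [->|->]]; rewrite eqxx ?orbT.
Qed.

Lemma length_size (T : Type) (s : seq T) : length s = size s.
Proof. by elim: s => //= a s ->. Qed.

Lemma count_occ_true (s : seq bool) : count_occ Bool.bool_dec s true = count id s.
Proof. by elim: s => [|[] s IH] //=; rewrite IH. Qed.

Definition zeta (N : nat) : Rdefinitions.R[i] := toC (cis (2 * PI / INR N * INR 1)).

Lemma zeta_expN (N : nat) : (0 < N)%N -> zeta N ^+ N = 1.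
Proof.
move/ltP=> N_gt0.
by rewrite /zeta toC_cis_exp dft_angle_full_turn // /toC /= cos_2PI sin_2PI.
Qed.

Lemma zeta_neq1 (N : nat) : (1 < N)%N -> zeta N != 1.
Proof.
move/ltP=> N_gt1; apply/eqP; rewrite /zeta /toC /= => -[cos1 _].
by move: (cos_dft_angle_lt_1 _ N_gt1); rewrite cos1; apply: Rlt_irrefl.
Qed.

Lemma toC_dft1 (N : nat) (s : seq bool) :
  toC (dft N s 1) = zeta N * (bits_poly _ s).[zeta N].
Proof. by rewrite /dft toC_dft_aux expr1. Qed.

Lemma Omega_dft1_inj (N r : nat) (x y : seq bool) :
  prime N -> Omega N r x -> Omega N r y -> dft N x 1 = dft N y 1 -> x = y.
Proof.
rewrite /Omega !length_size !count_occ_true.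
move=> N_pr [size_x count_x] [size_y count_y] dft_xy.
have zetaN := zeta_expN _ (prime_gt0 N_pr).
have zeta_neq0 : zeta N != 0.
  by apply: contra_eq_neq zetaN => ->; rewrite expr0n gtn_eqF ?prime_gt0 // eq_sym oner_neq0.
apply: (@bits_poly_inj rat); first by rewrite size_x size_y.
apply/eqP; rewrite -subr_eq0; apply/eqP.
apply: (poly_rat_eq0_at_prime_root _ _ _ _ N_pr zetaN (zeta_neq1 _ (prime_gt1 N_pr))).
- rewrite (leq_trans (size_polyD _ _)) // geq_max size_polyN.
  by rewrite -{1}size_x -size_y !size_bits_poly.
- rewrite /root raddfB /= !map_bits_poly hornerD hornerN subr_eq0.
  by apply/eqP/(mulfI zeta_neq0); rewrite -!toC_dft1 dft_xy.
- by rewrite /root hornerD hornerN !bits_poly_at1 count_x count_y subrr.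
Qed.

End BinaryDFT.

Theorem theorem1 (N r : nat) :
  prime (Z.of_nat N) -> Nat.Odd N ->
  (0 < r)%nat -> (r <= (N - 1) / 2)%nat ->
  forall x y : list bool, Omega N r x -> Omega N r y -> x <> y ->
  dft N x 1 <> dft N y 1.
Proof.
intros N_pr _ _ _ x y Hx Hy x_neq_y dft_xy.
apply x_neq_y, (BinaryDFT.Omega_dft1_inj N r); [apply BinaryDFT.prime_of_Zprime|..]; assumption.
Qed.
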